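(* Let $p$ be a prime and $e > 0$. The distinct elementary divisors of $A_{p^e}$ are $p^i$ for $0 \le i \le e$, and the multiplicity of $p^i$ among the elementary divisors is $\phi(p^{e-i})$.
   Context: For a positive integer $k$, let $\Phi_d$ denote the $d$th cyclotomic polynomial and let $\Psi_k : \mathbf{Z}[X]/(X^k-1) \to \bigoplus_{d \mid k} \mathbf{Z}[X]/(\Phi_d(X))$ be the natural map $f \bmod (X^k-1) \mapsto \bigoplus_{d\mid k} f \bmod \Phi_d(X)$. Endow $\mathbf{Z}[X]/(X^k-1)$ with the basis $(1, \overline{X}, \dots, \overline{X}^{k-1})$, each $\mathbf{Z}[X]/(\Phi_d(X))$ with the basis $(1, \overline{X}, \dots, \overline{X}^{\phi(d)-1})$, and order the summands by increasing $d$. $A_k$ is the $k\times k$ integer matrix of $\Psi_k$ with respect to these bases. Elementary divisors are those of the Smith normal form over $\mathbf{Z}$, taken non-negative; $\phi$ is Euler's totient function. *)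

From mathcomp Require Import all_boot all_order all_algebra all_field.
Set Implicit Arguments. Unset Strict Implicit. Unset Printing Implicit Defensive.
Import GRing.Theory Num.Theory.
Local Open Scope ring_scope.

(* Row index bookkeeping: the codomain  (+)_{d | k} Z[X]/(Phi_d)  has the
   concatenated basis, summands ordered by increasing d (divisors k is the
   increasing list of divisors), each summand with basis 1, X, ..., X^{phi d - 1}.
   [locate s r] returns (d, t): global row r is the t-th basis vector of the
   summand for d. *)
Fixpoint locate (s : seq nat) (r : nat) : nat * nat :=
  match s with
  | [::] => (0%N, 0%N)
  | d :: s' => if (r < totient d)%N then (d, r) else locate s' (r - totient d)
  end.

(* A_k : column j = coordinates of Psi_k(X^j) = (X^j mod Phi_d)_{d | k}.
   'Phi_d is mathcomp's integral cyclotomic polynomial (monic), so %% is the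
   genuine Euclidean remainder in Z[X]. *)
Definition A_mat (k : nat) : 'M[int]_k :=
  \matrix_(i < k, j < k)
    (('X^j %% 'Phi_((locate (divisors k) i).1)) `_ (locate (divisors k) i).2).

Definition is_elem_divisors (n : nat) (M : 'M[int]_n) (d : seq int) : Prop :=
  [/\ size d = n, all (fun x => 0 <= x) d, sorted (fun a b => (a %| b)%Z) d &
   exists2 L : 'M[int]_n, L \in unitmx &
   exists2 R : 'M[int]_n, R \in unitmx &
     M = L *m (\matrix_(i, j) (d`_i *+ (i == j :> nat))) *m R].

From mathcomp Require Import all_boot all_order all_algebra all_field.
From mathcomp Require Import zify.
Set Implicit Arguments. Unset Strict Implicit. Unset Printing Implicit Defensive.
Import GRing.Theory Num.Theory.
Local Open Scope ring_scope.

(* Splitting Z[X]/(X^(p^(e+1)) - 1) into the summands for d | p^e and the one for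
   Phi_(p^(e+1)) = sum_(b < p) X^(b p^e) puts A_(p^(e+1)) in the block form
   [[A P, A], [1, -P^T]] with A = A_(p^e), P the 0/1 matrix of t |-> t mod p^e
   and P P^T = p - 1, which is equivalent to 1 (+) p A.  By induction A_(p^e) is
   equivalent to the diagonal matrix with phi(p^(e-i)) entries p^i.  Conversely,
   the number of solutions of M v = 0 over Z/m is invariant under equivalence and
   equals prod_i gcd(d_i, m) for a diagonal M; a prime m <> p shows that every d_i
   is a power of p, and m = p^j recovers sum_i min(v_i, j), hence the multiset of
   exponents v_i. *)

Lemma locate_cat (s1 s2 : seq nat) r :
  locate (s1 ++ s2) r = if (r < sumn (map totient s1))%N then locate s1 r
                        else locate s2 (r - sumn (map totient s1)).
Proof.
elim: s1 r => [|d s IH] r /=; first by rewrite subn0.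
case: ifP => h1; first by rewrite ifT //; apply: leq_trans h1 (leq_addr _ _).
rewrite IH subnDA; case: ifP => h2; case: ifP => h3 //; lia.
Qed.

Lemma locate_mem (s : seq nat) r : (r < sumn (map totient s))%N ->
  (locate s r).1 \in s.
Proof.
elim: s r => [|d s IH] r //=; case: ifP => [_ _|h1 h2]; first exact: mem_head.
by rewrite in_cons IH ?orbT //; lia.
Qed.

Lemma Cyclotomic_lead_unit n : lead_coef 'Phi_n \in GRing.unit.
Proof. by rewrite (monicP (Cyclotomic_monic n)) unitr1. Qed.

Lemma Cyclotomic_dvd_Xn_sub1 d n : (0 < n)%N -> d \in divisors n ->
  exists w : {poly int}, 'X^n - 1 = w * 'Phi_d.
Proof.
move=> n_gt0 dn; rewrite -(prod_Cyclotomic n_gt0) (bigD1_seq d dn (divisors_uniq n)).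
by exists (\prod_(d' <- divisors n | d' != d) 'Phi_d'); rewrite mulrC.
Qed.

Lemma modp_Cyclotomic_Xn d n j : (0 < n)%N -> d \in divisors n ->
  'X^j %% 'Phi_d = 'X^(j %% n) %% 'Phi_d :> {poly int}.
Proof.
move=> n_gt0 /(Cyclotomic_dvd_Xn_sub1 n_gt0) [w Xn_sub1].
have -> : 'X^j = ('X^(j %% n) * (\sum_(i < j %/ n) ('X^n) ^+ i) * w) * 'Phi_d
                 + 'X^(j %% n) :> {poly int}.
  rewrite -!mulrA -Xn_sub1 (mulrC (\sum_(i < _) _)) -subrX1 mulrBr mulr1 subrK.
  by rewrite -exprM -exprD {1}(divn_eq j n) addnC mulnC.
by rewrite (Pdiv.IdomainUnit.modpD (Cyclotomic_lead_unit d)) modp_mull add0r.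
Qed.

Lemma sum_arith_delta (R : pzSemiRingType) (m n a t : nat) :
  (a < n)%N -> (t < m * n)%N ->
  \sum_(b < m) ((t == a + b * n)%N%:R : R) = ((t %% n)%N == a)%:R.
Proof.
move=> a_lt_n t_lt_mn; case: eqP => [t_mod | t_mod].
  have t_div : (t %/ n < m)%N by rewrite ltn_divLR //; lia.
  rewrite (bigD1 (Ordinal t_div)) //= {1}(divn_eq t n) t_mod addnC eqxx big1 ?addr0 //.
  move=> b /eqP b_neq; case: eqP => // t_eq; case: b_neq; apply: val_inj => /=.
  by rewrite t_eq addnC divnMDl ?divn_small ?addn0 //; lia.
rewrite big1 // => b _; case: eqP => // t_eq; case: t_mod.
by rewrite t_eq addnC modnMDl modn_small.
Qed.

Lemma coef_sum_Xn_arith (R : nzRingType) (m n a t : nat) :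
  (a < n)%N -> (t < m * n)%N ->
  (\sum_(b < m) 'X^(a + b * n) : {poly R})`_t = ((t %% n)%N == a)%:R.
Proof.
move=> a_lt_n t_lt_mn; rewrite coef_sum -(sum_arith_delta R a_lt_n t_lt_mn).
by under eq_bigr do rewrite coefXn.
Qed.

Section MatrixEquivalence.
Variable R : comPzRingType.

Definition mxequiv m1 m2 n1 n2 (M : 'M[R]_(m1, m2)) (N : 'M[R]_(n1, n2)) :=
  exists (U : 'M_(m1, n1)) (U' : 'M_(n1, m1)) (V : 'M_(n2, m2)) (V' : 'M_(m2, n2)),
  [/\ U *m U' = 1%:M, U' *m U = 1%:M, V *m V' = 1%:M, V' *m V = 1%:M
    & M = U *m N *m V].

Lemma mxequiv_refl m n (M : 'M[R]_(m, n)) : mxequiv M M.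
Proof. by exists 1%:M, 1%:M, 1%:M, 1%:M; rewrite !mulmx1 mul1mx. Qed.

Lemma mxequiv_sym m1 m2 n1 n2 (M : 'M[R]_(m1, m2)) (N : 'M[R]_(n1, n2)) :
  mxequiv M N -> mxequiv N M.
Proof.
move=> [U [U' [V [V' [UU' U'U VV' V'V ->]]]]]; exists U', U, V', V; split=> //.
by rewrite !mulmxA U'U mul1mx -mulmxA VV' mulmx1.
Qed.

Lemma mxequiv_trans m1 m2 n1 n2 k1 k2 (M : 'M[R]_(m1, m2)) (N : 'M[R]_(n1, n2))
    (P : 'M[R]_(k1, k2)) :
  mxequiv M N -> mxequiv N P -> mxequiv M P.
Proof.
move=> [U [U' [V [V' [UU' U'U VV' V'V ->]]]]] [W [W' [X [X' [WW' W'W XX' X'X ->]]]]].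
exists (U *m W), (W' *m U'), (X *m V), (V' *m X'); split; last by rewrite !mulmxA.
- by rewrite mulmxA -(mulmxA U) WW' mulmx1 UU'.
- by rewrite mulmxA -(mulmxA W') U'U mulmx1 W'W.
- by rewrite mulmxA -(mulmxA X) VV' mulmx1 XX'.
- by rewrite mulmxA -(mulmxA V') X'X mulmx1 V'V.
Qed.

Lemma mxequiv_castmx m1 m2 n1 n2 (eq_mn : (n1 = m1) * (n2 = m2)) (N : 'M[R]_(n1, n2)) :
  mxequiv (castmx eq_mn N) N.
Proof.
case: eq_mn => eq1 eq2; case: m1 / eq1; case: m2 / eq2.
by rewrite castmx_id; apply: mxequiv_refl.
Qed.

Lemma mxequiv_scale m1 m2 n1 n2 (c : R) (M : 'M[R]_(m1, m2)) (N : 'M[R]_(n1, n2)) :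
  mxequiv M N -> mxequiv (c *: M) (c *: N).
Proof.
move=> [U [U' [V [V' [UU' U'U VV' V'V ->]]]]].
by exists U, U', V, V'; split; rewrite // scalemxAl scalemxAr.
Qed.

Lemma mxequiv_block1 r m1 m2 n1 n2 (M : 'M[R]_(m1, m2)) (N : 'M[R]_(n1, n2)) :
  mxequiv M N ->
  mxequiv (block_mx (1%:M : 'M_r) 0 0 M) (block_mx (1%:M : 'M_r) 0 0 N).
Proof.
move=> [U [U' [V [V' [UU' U'U VV' V'V ->]]]]].
exists (block_mx 1%:M 0 0 U), (block_mx 1%:M 0 0 U'),
  (block_mx 1%:M 0 0 V), (block_mx 1%:M 0 0 V').
by split; rewrite !mulmx_block !(mulmx0, mul0mx, mulmx1, mul1mx, addr0, add0r)
  ?UU' ?U'U ?VV' ?V'V -?scalar_mx_block.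
Qed.

Lemma mulmx_block1N m n (X : 'M[R]_(m, n)) :
  block_mx 1%:M X 0 1%:M *m block_mx 1%:M (- X) 0 1%:M = 1%:M.
Proof.
by rewrite mulmx_block !(mulmx0, mul0mx, mulmx1, mul1mx, addr0, add0r) ?addrN ?addNr
  -scalar_mx_block.
Qed.

Lemma mulmx_block_swap m n :
  block_mx 0 1%:M 1%:M 0 *m block_mx 0 1%:M 1%:M 0 = 1%:M :> 'M[R]_(m + n).
Proof.
by rewrite mulmx_block !(mulmx0, mul0mx, mulmx1, mul1mx, addr0, add0r)
  -scalar_mx_block.
Qed.

(* Since P P^T = c - 1, clearing the lower-left identity block leaves
   B P P^T + B = c B. *)
Lemma mxequiv_block_reduce n r (c : R) (B : 'M[R]_n) (P : 'M[R]_(n, r)) :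
  P *m P^T = (c - 1)%:M ->
  mxequiv (block_mx (B *m P) B 1%:M (- P^T)) (block_mx (1%:M : 'M_r) 0 0 (c *: B)).
Proof.
move=> PPt.
pose S : 'M[R]_(n + r, r + n) := block_mx 0 1%:M 1%:M 0.
pose S' : 'M[R]_(r + n, n + r) := block_mx 0 1%:M 1%:M 0.
exists (block_mx 1%:M (B *m P) 0 1%:M *m S), (S' *m block_mx 1%:M (- (B *m P)) 0 1%:M),
  (block_mx 1%:M (- P^T) 0 1%:M), (block_mx 1%:M P^T 0 1%:M); split.
- by rewrite mulmxA -(mulmxA _ S) mulmx_block_swap mulmx1 mulmx_block1N.
- rewrite mulmxA -(mulmxA S') -{2}[B *m P]opprK mulmx_block1N mulmx1.
  exact: mulmx_block_swap.
- by rewrite -{2}[P^T]opprK mulmx_block1N.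
- exact: mulmx_block1N.
rewrite !mulmx_block !(mulmx0, mul0mx, mulmx1, mul1mx, addr0, add0r).
by rewrite mulmxN -mulmxA PPt mul_mx_scalar scalerBl scale1r opprB subrK.
Qed.

End MatrixEquivalence.

Definition modn_mx (R : pzSemiRingType) n r : 'M[R]_(n, r) :=
  \matrix_(a, t) ((t %% n)%N == a)%:R.

Lemma mulmx_modn_mxE (R : pzSemiRingType) m n r (M : 'M[R]_(m, n)) (n_gt0 : (0 < n)%N)
    i (t : 'I_r) :
  (M *m modn_mx R n r) i t = M i (Ordinal (ltn_pmod t n_gt0)).
Proof.
rewrite mxE (bigD1 (Ordinal (ltn_pmod t n_gt0))) //= mxE eqxx mulr1 big1 ?addr0 //.
move=> a /eqP a_neq; rewrite mxE; case: eqP => [t_mod|]; last by rewrite mulr0.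
by case: a_neq; apply: val_inj; rewrite /= t_mod.
Qed.

Lemma sum_modn_eq (R : pzSemiRingType) m n a : (a < n)%N ->
  \sum_(t < m * n) (((t %% n)%N == a)%:R : R) = m%:R.
Proof.
move=> a_lt_n; under eq_bigr => t _ do rewrite -(sum_arith_delta R a_lt_n (ltn_ord t)).
rewrite exchange_big /= -[m in RHS]card_ord -sumr_const; apply: eq_bigr => b _.
have ab_lt : (a + b * n < m * n)%N.
  by have := leq_mul (ltn_ord b) (leqnn n); rewrite mulSn; lia.
rewrite (bigD1 (Ordinal ab_lt)) //= eqxx big1 ?addr0 // => t /eqP t_neq.
by case: eqP => // t_eq; case: t_neq; apply: val_inj.
Qed.

Lemma modn_mx_mulmx_tr (R : pzSemiRingType) m n : (0 < n)%N ->
  modn_mx R n (m * n) *m (modn_mx R n (m * n))^T = m%:R%:M.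
Proof.
move=> n_gt0; apply/matrixP => a a'; rewrite !mxE.
under eq_bigr => t _ do rewrite !mxE -natrM mulnb.
have [<- | a_neq] := eqVneq a a'.
  by under eq_bigr do rewrite andbb; apply: sum_modn_eq.
rewrite big1 // => t _; case: eqP => // t_a; case: eqP => // t_a'.
by case/eqP: a_neq; apply: val_inj; rewrite /= -t_a -t_a'.
Qed.

Definition diag_seq (R : pzSemiRingType) n (d : seq R) : 'M[R]_n :=
  \matrix_(i, j) (d`_i *+ (i == j :> nat)).

Lemma castmx_diag_seq (R : pzSemiRingType) m n (eq_mn : (m = n) * (m = n)) (d : seq R) :
  castmx eq_mn (diag_seq m d) = diag_seq n d.
Proof. by apply/matrixP => i j; rewrite castmxE !mxE. Qed.

Lemma block1_scale_diag_seq (R : pzRingType) r n (c : R) (d : seq R) : size d = n ->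
  block_mx (1%:M : 'M_r) 0 0 (c *: diag_seq n d)
    = diag_seq (r + n) (nseq r 1 ++ map ( *%R c) d).
Proof.
move=> size_d; apply/matrixP => i j.
case: (split_ordP i) => i' ->; case: (split_ordP j) => j' ->;
  rewrite ?block_mxEul ?block_mxEur ?block_mxEdl ?block_mxEdr !mxE /=;
  have i'_lt := ltn_ord i'; have j'_lt := ltn_ord j'.
- by rewrite nth_cat size_nseq i'_lt nth_nseq i'_lt.
- by rewrite (_ : (i' == r + j' :> nat) = false) ?mulr0n //; apply/negbTE; lia.
- by rewrite (_ : (r + i' == j' :> nat) = false) ?mulr0n //; apply/negbTE; lia.
rewrite nth_cat size_nseq ltnNge leq_addr /= addKn (nth_map 0) ?size_d //.
by rewrite eqn_add2l mulrnAr.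
Qed.

Lemma A_mat1 : A_mat 1 = diag_seq 1 [:: 1].
Proof.
apply/matrixP => i j; rewrite (ord1 i) (ord1 j) !mxE /=.
by rewrite modp_small ?size_Cyclotomic ?size_polyC // expr0 coefC.
Qed.

(* A_(p^(e+1)) ~ 1 (+) p A_(p^e) contributes totient (p^(e+1)) unit divisors and
   raises every elementary divisor of A_(p^e) by one factor p. *)
Fixpoint smith_exponents (p e : nat) : seq nat :=
  if e is e'.+1 then nseq (totient (p ^ e)) 0%N ++ map succn (smith_exponents p e')
  else [:: 0%N].

Section PrimePower.
Variable p : nat.
Hypothesis p_prime : prime p.

Let p_gt0 : (0 < p)%N. Proof. exact: prime_gt0. Qed.
Let pe_gt0 e : (0 < p ^ e)%N. Proof. by rewrite expn_gt0 p_gt0. Qed.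

Lemma divisors_pfactor e : divisors (p ^ e) = [seq p ^ i | i <- iota 0 e.+1]%N.
Proof.
apply: (irr_sorted_eq ltn_trans ltnn (sorted_divisors_ltn _)).
  rewrite sorted_map; apply: sub_sorted (iota_ltn_sorted 0 e.+1) => a b /=.
  by rewrite ltn_exp2l // prime_gt1.
move=> x; rewrite -dvdn_divisors //; apply/dvdn_pfactor/mapP => // -[i].
  by move=> i_le ->; exists i; rewrite // mem_iota.
by rewrite mem_iota => /andP[_ i_le] ->; exists i.
Qed.

Lemma divisors_pfactorS e : divisors (p ^ e.+1) = rcons (divisors (p ^ e)) (p ^ e.+1)%N.
Proof. by rewrite !divisors_pfactor -cats1 -addn1 iotaD map_cat. Qed.

Lemma pfactorS_totientD e : (p ^ e.+1 = p ^ e + totient (p ^ e.+1))%N.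
Proof. by rewrite totient_pfactor // expnS; case: p p_gt0 => // q _ /=; lia. Qed.

Lemma sumn_totient_divisors_pfactor e : sumn (map totient (divisors (p ^ e))) = (p ^ e)%N.
Proof.
elim: e => [|e IH]; first by rewrite divisors_pfactor.
by rewrite divisors_pfactorS -cats1 map_cat sumn_cat IH /= addn0 -pfactorS_totientD.
Qed.

Lemma locate_pfactorS_low e i : (i < p ^ e)%N ->
  locate (divisors (p ^ e.+1)) i = locate (divisors (p ^ e)) i.
Proof.
move=> i_lt.
by rewrite divisors_pfactorS -cats1 locate_cat sumn_totient_divisors_pfactor i_lt.
Qed.

Lemma locate_pfactorS_high e i : (p ^ e <= i < p ^ e.+1)%N ->
  locate (divisors (p ^ e.+1)) i = (p ^ e.+1, i - p ^ e)%N.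
Proof.
move=> /andP[le_i lt_i]; have := pfactorS_totientD e.
rewrite divisors_pfactorS -cats1 locate_cat sumn_totient_divisors_pfactor.
by rewrite ltnNge le_i /=; case: ifP => //; lia.
Qed.

Lemma Cyclotomic_pfactor e :
  'Phi_(p ^ e.+1) = \sum_(b < p) 'X^(b * p ^ e) :> {poly int}.
Proof.
have Xpe_neq0 : 'X^(p ^ e) - 1 != 0 :> {poly int}.
  by rewrite -size_poly_eq0 size_XnsubC.
apply: (mulfI Xpe_neq0); have := prod_Cyclotomic (pe_gt0 e.+1).
rewrite divisors_pfactorS -cats1 big_cat big_seq1 prod_Cyclotomic // => ->.
under eq_bigr do rewrite mulnC exprM.
by rewrite -subrX1 -exprM -expnSr.
Qed.

Lemma Xn_modp_Cyclotomic_pfactor e a : (a < p ^ e)%N ->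
  'X^(totient (p ^ e.+1) + a) %% 'Phi_(p ^ e.+1)
    = - \sum_(b < p.-1) 'X^(a + b * p ^ e) :> {poly int}.
Proof.
move=> a_lt; have tot : totient (p ^ e.+1) = (p.-1 * p ^ e)%N by rewrite totient_pfactor.
apply/esym/(Pdiv.IdomainUnit.modpP (Cyclotomic_lead_unit _) (q := 'X^a)).
  have sum_last (F : nat -> {poly int}) :
      \sum_(b < p) F b = \sum_(b < p.-1) F b + F p.-1.
    by rewrite -[in LHS](prednK p_gt0) big_ord_recr.
  rewrite Cyclotomic_pfactor (sum_last (fun b => 'X^(b * p ^ e))) mulrDr mulr_sumr.
  rewrite -exprD -tot addnC.
  by under eq_bigr do rewrite -exprD; rewrite addrAC subrr add0r.
rewrite size_polyN size_Cyclotomic ltnS; apply: leq_trans (size_sum _ _ _) _.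
apply/bigmax_leqP => b _; rewrite size_polyXn tot.
have : (b.+1 * p ^ e <= p.-1 * p ^ e)%N by rewrite leq_mul2r ltn_ord orbT.
rewrite mulSn; lia.
Qed.

(* Rows split as the summands for d | p^e, then the summand for p^(e+1); columns
   split at totient (p^(e+1)) = (p - 1) p^e. *)
Lemma A_mat_pfactorS_block e (eq_r : (p ^ e.+1 = p ^ e + totient (p ^ e.+1))%N)
    (eq_c : (p ^ e.+1 = totient (p ^ e.+1) + p ^ e)%N) :
  let P := modn_mx int (p ^ e) (totient (p ^ e.+1)) in
  castmx (eq_r, eq_c) (A_mat (p ^ e.+1))
    = block_mx (A_mat (p ^ e) *m P) (A_mat (p ^ e)) 1%:M (- P^T).
Proof.
move=> P; have tot : totient (p ^ e.+1) = (p.-1 * p ^ e)%N by rewrite totient_pfactor.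
have low_rowE (i : 'I_(p ^ e)) j :
    ('X^j %% 'Phi_(locate (divisors (p ^ e.+1)) i).1)`_(locate (divisors (p ^ e.+1)) i).2
      = A_mat (p ^ e) i (Ordinal (ltn_pmod j (pe_gt0 e))).
  rewrite mxE locate_pfactorS_low //.
  rewrite (modp_Cyclotomic_Xn j (pe_gt0 e)) // locate_mem //.
  by rewrite sumn_totient_divisors_pfactor.
apply/matrixP => i j; rewrite castmxE mxE.
case: (split_ordP i) => i' ->; case: (split_ordP j) => j' ->;
  rewrite ?block_mxEul ?block_mxEur ?block_mxEdl ?block_mxEdr /=.
- by rewrite low_rowE (mulmx_modn_mxE _ (pe_gt0 e)).
- by rewrite low_rowE; congr (A_mat _ _ _); apply: val_inj;
    rewrite /= tot modnMDl modn_small.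
- have i'_lt := ltn_ord i'; have j'_lt := ltn_ord j'.
  rewrite locate_pfactorS_high //= ?addKn; last by have := pfactorS_totientD e; lia.
  by rewrite modp_small ?coefXn ?mxE // size_polyXn size_Cyclotomic ltnS.
- have i'_lt := ltn_ord i'; have j'_lt := ltn_ord j'.
  rewrite locate_pfactorS_high //= ?addKn; last by have := pfactorS_totientD e; lia.
  by rewrite Xn_modp_Cyclotomic_pfactor // coefN coef_sum_Xn_arith -?tot // !mxE.
Qed.

Local Notation smith_diag e := [seq (p ^ v)%:Z | v <- smith_exponents p e].

Lemma size_smith_exponents e : size (smith_exponents p e) = (p ^ e)%N.
Proof.
elim: e => [|e IH] //=.
by rewrite size_cat size_nseq size_map IH addnC -pfactorS_totientD.
Qed.

Lemma smith_exponents_le e : all (fun v => v <= e)%N (smith_exponents p e).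
Proof.
elim: e => [|e IH] //=; rewrite all_cat all_nseq orbT all_map.
exact: sub_all IH.
Qed.

Lemma sorted_smith_exponents e : sorted leq (smith_exponents p e).
Proof.
elim: e => [|e IH] //=; elim: (totient _) => [|n IHn] /=; first by rewrite sorted_map.
by rewrite path_min_sorted //; apply/allP.
Qed.

Lemma count_smith_exponents e i : (i <= e)%N ->
  count (pred1 i) (smith_exponents p e) = totient (p ^ (e - i)).
Proof.
elim: e i => [|e IH] [|i] //= le_ie; rewrite count_cat count_nseq /= count_map.
  by rewrite mul1n (@eq_count _ _ pred0) ?count_pred0 ?addn0.
by rewrite mul0n add0n subSS -IH.
Qed.

Lemma smith_diag_props e :
  [/\ size (smith_diag e) = (p ^ e)%N, all (fun x => 0 <= x) (smith_diag e)
    & sorted (fun a b => (a %| b)%Z) (smith_diag e)].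
Proof.
split; first by rewrite size_map size_smith_exponents.
  by rewrite all_map; apply/allP.
rewrite sorted_map; apply: sub_sorted (sorted_smith_exponents e) => a b /= le_ab.
exact: dvdn_exp2l.
Qed.

Lemma A_mat_pfactor_equiv e : mxequiv (A_mat (p ^ e)) (diag_seq (p ^ e) (smith_diag e)).
Proof.
elim: e => [|e IH]; first by rewrite expn0 A_mat1; apply: mxequiv_refl.
have eq_r := pfactorS_totientD e.
have eq_c : (p ^ e.+1 = totient (p ^ e.+1) + p ^ e)%N by rewrite addnC.
have PPt : modn_mx int (p ^ e) (totient (p ^ e.+1)) *m (modn_mx _ _ _)^T = (p%:Z - 1)%:M.
  by rewrite totient_pfactor // modn_mx_mulmx_tr // -subn1 natrB // natz.
rewrite -(castmxK eq_r eq_c (A_mat _)) A_mat_pfactorS_block.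
apply: mxequiv_trans (mxequiv_castmx _ _) _.
apply: mxequiv_trans (mxequiv_block_reduce (A_mat _) PPt) _.
apply: mxequiv_trans (mxequiv_block1 _ (mxequiv_scale p%:Z IH)) _.
rewrite block1_scale_diag_seq; last by rewrite size_map size_smith_exponents.
have -> : smith_diag e.+1 = nseq (totient (p ^ e.+1)) 1 ++ map ( *%R p%:Z) (smith_diag e).
  rewrite /= map_cat map_nseq -map_comp; congr (_ ++ _).
  by rewrite -map_comp; apply: eq_map => v; rewrite /= expnS PoszM.
rewrite -(castmx_diag_seq (esym eq_c, esym eq_c)); apply/mxequiv_sym/mxequiv_castmx.
Qed.

End PrimePower.

Lemma count_dvdn_iota g d : (0 < d)%N -> count (dvdn d) (iota 0 (g * d)) = g.
Proof.
move=> d_gt0; have one_multiple : count (dvdn d) (iota 0 d) = 1%N.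
  rewrite -[X in iota _ X](prednK d_gt0) /= dvdn0 add1n; congr _.+1.
  apply/eqP; rewrite -leqn0 leqNgt -has_count; apply/hasPn => x.
  by rewrite mem_iota add1n (prednK d_gt0) => /andP[x_gt0 x_lt]; rewrite gtnNdvd.
elim: g => [|g IH]; first by rewrite mul0n.
rewrite mulSn addnC iotaD count_cat IH add0n -(addn0 (g * d)%N) iotaDl count_map.
rewrite -addn1 -one_multiple; congr (_ + _)%N; apply: eq_count => x /=.
by rewrite dvdn_addr ?dvdn_mull.
Qed.

Lemma count_dvdn_mul_iota k m : (0 < m)%N ->
  count (fun x => m %| k * x)%N (iota 0 m) = gcdn k m.
Proof.
move=> m_gt0; have g_gt0 : (0 < gcdn k m)%N by rewrite gcdn_gt0 m_gt0 orbT.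
have [k' k_eq] : exists k', k = (gcdn k m * k')%N.
  by exists (k %/ gcdn k m)%N; rewrite mulnC divnK ?dvdn_gcdl.
have [m' m_eq] : exists m', m = (gcdn k m * m')%N.
  by exists (m %/ gcdn k m)%N; rewrite mulnC divnK ?dvdn_gcdr.
have m'_gt0 : (0 < m')%N by move: m_gt0; rewrite m_eq muln_gt0 => /andP[].
have co_m'k' : coprime m' k'.
  by rewrite /coprime -(eqn_pmul2l g_gt0) muln1 muln_gcdr -k_eq -m_eq gcdnC.
rewrite -[RHS](count_dvdn_iota _ m'_gt0) -m_eq; apply: eq_count => x /=.
set g := gcdn k m in g_gt0 m_eq k_eq *.
by rewrite {1}m_eq k_eq -mulnA dvdn_pmul2l // Gauss_dvdr.
Qed.

Section KernelModulo.
Variable m : nat.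
Hypothesis m_gt1 : (1 < m)%N.

Definition kermx_mod n (M : 'M[int]_n) : {set 'cV['Z_m]_n} :=
  [set v | map_mx intr M *m v == 0].

Lemma card_kermx_mod_equiv n (M N : 'M[int]_n) :
  mxequiv M N -> #|kermx_mod M| = #|kermx_mod N|.
Proof.
move=> [U [U' [V [V' [_ U'U _ V'V ->]]]]].
have -> : kermx_mod (U *m N *m V) = (fun v => map_mx intr V *m v) @^-1: kermx_mod N.
  apply/setP => v; rewrite !inE !map_mxM -!mulmxA.
  apply/eqP/eqP => [UNVv | ->]; last by rewrite mulmx0.
  by rewrite -[LHS]mul1mx -(map_mx1 intr) -U'U map_mxM -mulmxA UNVv mulmx0.
apply: card_preimset => v w /(congr1 (mulmx (map_mx intr V'))).
by rewrite !mulmxA -map_mxM V'V map_mx1 !mul1mx.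
Qed.

Lemma card_Zp_mul_eq0 k : #|[pred x : 'Z_m | k%:R * x == 0]| = gcdn k m.
Proof.
rewrite cardE /enum_mem size_filter -enumT -(count_dvdn_mul_iota k (ltnW m_gt1)).
rewrite -[X in iota 0 X](Zp_cast m_gt1) -val_enum_ord count_map.
apply: eq_count => x /=.
rewrite inE -val_eqE /= val_Zp_nat // /dvdn.
by rewrite [X in (_ %% X)%N]Zp_cast // modnMml.
Qed.

Lemma card_kermx_mod_diag n (d : seq int) : all (fun x => 0 <= x) d ->
  #|kermx_mod (diag_seq n d)| = (\prod_(i < n) gcdn (absz (d`_i)%R) m)%N.
Proof.
move=> d_ge0.
pose col_ffun (v : 'cV['Z_m]_n) : {ffun 'I_n -> 'Z_m} := [ffun i => v i 0].
have col_ffun_inj : injective col_ffun.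
  move=> v w /ffunP vw; apply/matrixP => i j; rewrite (ord1 j).
  by have := vw i; rewrite !ffunE.
have diag_mulE (v : 'cV['Z_m]_n) i :
    (map_mx intr (diag_seq n d) *m v) i 0 = intr d`_i * v i 0.
  rewrite mxE (bigD1 i) //= !mxE eqxx mulr1n big1 ?addr0 // => j /negbTE j_neq.
  by rewrite !mxE val_eqE eq_sym j_neq mulr0n rmorph0 mul0r.
rewrite -(card_imset _ col_ffun_inj).
have -> : col_ffun @: kermx_mod (diag_seq n d)
    = [set f in family (fun i : 'I_n => [pred x : 'Z_m | intr d`_i * x == 0])].
  apply/setP => f; rewrite inE; apply/imsetP/familyP => [[v] | f_ker].
    by rewrite inE => /eqP v_ker -> i; rewrite ffunE inE -diag_mulE v_ker mxE.
  exists (\col_i f i); last by apply/ffunP => i; rewrite ffunE mxE.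
  rewrite inE; apply/eqP/matrixP => i j; rewrite (ord1 j) diag_mulE !mxE.
  exact/eqP/f_ker.
rewrite cardsE card_family foldrE big_map big_enum /=; apply: eq_bigr => i _.
rewrite -card_Zp_mul_eq0; apply: eq_card => x; rewrite !inE.
suff -> : d`_i = (absz d`_i)%:Z by [].
have [i_lt | i_ge] := ltnP i (size d); last by rewrite nth_default.
by rewrite abszE ger0_norm //; apply: (all_nthP 0 d_ge0).
Qed.

End KernelModulo.

Lemma prod_gcdn_diag_seq_equiv n (d1 d2 : seq int) :
  size d1 = n -> size d2 = n -> all (fun x => 0 <= x) d1 -> all (fun x => 0 <= x) d2 ->
  mxequiv (diag_seq n d1) (diag_seq n d2) ->
  forall m, (1 < m)%N ->
  (\prod_(x <- d1) gcdn `|x|%N m = \prod_(x <- d2) gcdn `|x|%N m)%N.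
Proof.
move=> size_d1 size_d2 d1_ge0 d2_ge0 d12 m m_gt1.
have prod_nth (d : seq int) :
    (\prod_(i < size d) gcdn (absz (d`_i)%R) m = \prod_(x <- d) gcdn `|x| m)%N.
  by rewrite [RHS](big_nth 0) big_mkord.
have := card_kermx_mod_equiv m d12.
by rewrite !card_kermx_mod_diag // -[in LHS]size_d1 -size_d2 !prod_nth.
Qed.

Lemma sumn_minnS (s : seq nat) j :
  sumn [seq minn v j.+1 | v <- s] = (sumn [seq minn v j | v <- s] + count (leq j.+1) s)%N.
Proof. by elim: s => //= v s ->; case: (ltnP j v) => /= ?; lia. Qed.

(* Successive differences of j |-> sum_v min(v, j) count the v > j. *)
Lemma perm_eq_sumn_minn (s1 s2 : seq nat) : size s1 = size s2 ->
  (forall j, sumn [seq minn v j | v <- s1] = sumn [seq minn v j | v <- s2]) ->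
  perm_eq s1 s2.
Proof.
move=> size_s12 sum_s12.
have count_gt j : count (leq j.+1) s1 = count (leq j.+1) s2.
  apply/eqP; rewrite -(eqn_add2l (sumn [seq minn v j | v <- s1])).
  by rewrite {2}sum_s12 -!sumn_minnS sum_s12.
have count_ge t : count (leq t) s1 = count (leq t) s2.
  by case: t => [|t]; rewrite ?count_gt // !(@eq_count _ _ predT) ?count_predT.
have count_split s t : count (leq t) s = (count (pred1 t) s + count (leq t.+1) s)%N.
  by elim: s => //= v s ->; case: (ltngtP t v) => /= ?; lia.
apply/allP => t _; apply/eqP.
by have := count_split s1 t; have := count_split s2 t; rewrite count_ge count_gt; lia.
Qed.

Lemma pfactor_logn_of_primes p n : prime p ->
  (forall q, prime q -> q != p -> ~~ (q %| n)%N) -> n = (p ^ logn p n)%N.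
Proof.
move=> p_prime no_other.
have n_gt0 : (0 < n)%N.
  have p1_gt1 : (1 < p.+1)%N by rewrite ltnS prime_gt0.
  have q_prime := pdiv_prime p1_gt1.
  rewrite lt0n; apply: contraTneq (no_other _ q_prime _) => [->|]; first by rewrite dvdn0.
  apply: contraTneq (pdiv_dvd p.+1) => ->.
  by rewrite -addn1 dvdn_addr // dvdn1; apply: contraTneq p_prime => ->.
rewrite -p_part part_pnat_id //; apply/pnatP => // q q_prime q_dvd.
by rewrite inE; apply: contraLR q_dvd => /no_other ->.
Qed.

Lemma perm_eq_pfactor_seq p (d : seq int) (vs : seq nat) :
  prime p -> size d = size vs -> all (fun x => 0 <= x) d ->
  (forall m, (1 < m)%N ->
     (\prod_(x <- d) gcdn `|x| m = \prod_(v <- vs) gcdn (p ^ v) m)%N) ->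
  perm_eq d [seq (p ^ v)%:Z | v <- vs].
Proof.
move=> p_prime size_d d_ge0 prod_d.
have d_pfactor x : x \in d -> x = (p ^ logn p `|x|)%:Z.
  move=> xd; rewrite -pfactor_logn_of_primes ?gez0_abs //; first by apply: (allP d_ge0).
  move=> q q_prime q_neq_p; apply/negP => q_dvd.
  have := prod_d q (prime_gt1 q_prime); rewrite [X in _ = X]big1_seq => [prod_q|v _].
    have : (gcdn `|x| q %| 1)%N by rewrite -prod_q (big_rem x xd) dvdn_mulr.
    by rewrite (gcdn_idPr q_dvd) dvdn1 => /eqP q1; rewrite q1 in q_prime.
  apply/eqP; apply: coprimeXl; rewrite prime_coprime // dvdn_prime2 //.
  by rewrite eq_sym.
have -> : d = [seq (p ^ w)%:Z | w <- [seq logn p `|x| | x <- d]].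
  by rewrite -map_comp -[LHS]map_id; apply/eq_in_map => x /d_pfactor.
rewrite perm_map // perm_eq_sumn_minn ?size_map // => -[|j].
  by rewrite !sumnE !big_map !big1.
apply: (expnI (prime_gt1 p_prime)); rewrite !sumnE !big_map !expn_sum.
under eq_bigr do rewrite expn_min; under [RHS]eq_bigr do rewrite expn_min.
rewrite -prod_d; last by rewrite -{1}(expn0 p) ltn_exp2l // prime_gt1.
by apply: eq_big_seq => x /d_pfactor {2}->.
Qed.

Lemma is_elem_divisorsE n (M : 'M[int]_n) (d : seq int) :
  is_elem_divisors M d <->
  [/\ size d = n, all (fun x => 0 <= x) d, sorted (fun a b => (a %| b)%Z) d
    & mxequiv M (diag_seq n d)].
Proof.
split=> [[size_d d_ge0 sorted_d [U U_unit [V V_unit ->]]] |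
         [size_d d_ge0 sorted_d [U [U' [V [V' [UU' _ VV' _ ->]]]]]]].
  split=> //; exists U, (invmx U), V, (invmx V).
  by split; rewrite ?mulmxV ?mulVmx.
split=> //; exists U; first by have [] := mulmx1_unit UU'.
by exists V; first by have [] := mulmx1_unit VV'.
Qed.

Theorem theorem2p6 (p e : nat) : prime p -> (0 < e)%N ->
  (exists d, is_elem_divisors (A_mat (p ^ e)) d) /\
  (forall d : seq int, is_elem_divisors (A_mat (p ^ e)) d ->
     (forall x, x \in d -> exists2 i : nat, (i <= e)%N & x = (p ^ i)%:Z) /\
     (forall i : nat, (i <= e)%N ->
        count (pred1 (p ^ i)%:Z) d = totient (p ^ (e - i)))).
Proof.
move=> p_prime _; set D := [seq (p ^ v)%:Z | v <- smith_exponents p e].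
have [size_D D_ge0 sorted_D] := smith_diag_props p_prime e.
have A_D := A_mat_pfactor_equiv p_prime e.
split; first by exists D; apply/is_elem_divisorsE.
move=> d /is_elem_divisorsE[size_d d_ge0 _ A_d].
have d_D : perm_eq d D.
  apply: perm_eq_pfactor_seq => //; first by rewrite size_d size_smith_exponents.
  have d_D_equiv := mxequiv_trans (mxequiv_sym A_d) A_D.
  by move=> m m_gt1; rewrite (prod_gcdn_diag_seq_equiv size_d size_D d_ge0 D_ge0 d_D_equiv)
    ?big_map.
split=> [x | i le_ie].
  rewrite (perm_mem d_D) => /mapP[v v_in ->].
  by exists v => //; apply: (allP (smith_exponents_le p e)).
rewrite (permP d_D) count_map -(count_smith_exponents p le_ie).
by apply: eq_count => v /=; rewrite eqz_nat eqn_exp2l ?prime_gt1.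
Qed.
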